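(* Let $(\mathcal{V},g)$ be a finite-dimensional real scalar product space, let $J_1,\dots,J_m$ be skew-adjoint endomorphisms of $\mathcal{V}$ satisfying $J_iJ_j+J_jJ_i=2c_i\delta_{ij}\,\mathrm{id}$ for all $1\le i,j\le m$, where $c_1,\dots,c_m\in\mathbb{R}$ and at most one of the $c_i$ equals $0$, and let $\mu_0,\dots,\mu_m\in\mathbb{R}$. Then $R=\mu_0R^0+\sum_{i=1}^m\mu_iR^{J_i}$ is Jacobi-dual.
   Context: A scalar product space is a finite-dimensional real vector space with a nondegenerate symmetric bilinear form $g$; $\varepsilon_X=g(X,X)$, and $X$ is nonnull if $\varepsilon_X\neq 0$. $R^0(X,Y,Z,W)=g(Y,Z)g(X,W)-g(X,Z)g(Y,W)$; for skew-adjoint $J$, $R^J(X,Y,Z,W)=g(JX,Z)g(JY,W)-g(JY,Z)g(JX,W)+2g(JX,Y)g(JZ,W)$. The Jacobi operator of an algebraic curvature tensor $R$ is $\mathcal{J}_X(Y)=\sum_{i=1}^n\varepsilon_{E_i}R(Y,X,X,E_i)E_i$ for an orthonormal basis $(E_i)$. An eigenvector of $\mathcal{J}_X$ is a nonzero $Y$ with $\mathcal{J}_X(Y)=\lambda Y$ for some $\lambda\in\mathbb{R}$. $R$ is Jacobi-dual if for all $X,Y\in\mathcal{V}$ with $X$ nonnull: whenever $Y$ is an eigenvector of $\mathcal{J}_X$, then $X$ is an eigenvector of $\mathcal{J}_Y$. *)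

From HB Require Import structures.
From mathcomp Require Import all_boot all_order all_algebra.
Set Implicit Arguments. Unset Strict Implicit. Unset Printing Implicit Defensive.
Import Order.TTheory GRing.Theory Num.Theory.
Local Open Scope ring_scope.

(* The scalar product space (V, g) is modelled as V = 'rV[R]_n with
   g(x, y) = x G y^T for a symmetric invertible Gram matrix G.
   Endomorphisms are matrices acting on row vectors on the right. *)

Definition sp {R : realFieldType} {n : nat} (G : 'M[R]_n) (x y : 'rV[R]_n) : R :=
  (x *m G *m y^T) 0 0.

Definition app {R : realFieldType} {n : nat} (A : 'M[R]_n) (x : 'rV[R]_n) : 'rV[R]_n :=
  x *m A.

Definition skew_adjoint {R : realFieldType} {n : nat} (G : 'M[R]_n) (J : 'M[R]_n) : Prop :=
  forall x y, sp G (app J x) y = - sp G x (app J y).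

Definition R0 {R : realFieldType} {n : nat} (G : 'M[R]_n) (X Y Z W : 'rV[R]_n) : R :=
  sp G Y Z * sp G X W - sp G X Z * sp G Y W.

Definition RJ {R : realFieldType} {n : nat} (G : 'M[R]_n) (J : 'M[R]_n)
  (X Y Z W : 'rV[R]_n) : R :=
  sp G (app J X) Z * sp G (app J Y) W - sp G (app J Y) Z * sp G (app J X) W
  + 2 * sp G (app J X) Y * sp G (app J Z) W.

(* Jacobi operator J_X(Y): the unique vector with g(J_X(Y), Z) = R(Y,X,X,Z)
   for all Z, i.e. the index-raising of the covector Z |-> R(Y,X,X,Z).
   For an orthonormal basis (E_i) this is sum_i eps_{E_i} R(Y,X,X,E_i) E_i. *)
Definition jacobi {R : realFieldType} {n : nat} (G : 'M[R]_n)
  (Rt : 'rV[R]_n -> 'rV[R]_n -> 'rV[R]_n -> 'rV[R]_n -> R)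
  (X Y : 'rV[R]_n) : 'rV[R]_n :=
  (\row_k Rt Y X X (delta_mx 0 k)) *m invmx G.

Definition eigenvector {R : realFieldType} {n : nat} (A : 'rV[R]_n -> 'rV[R]_n)
  (Y : 'rV[R]_n) : Prop :=
  Y != 0 /\ exists lambda : R, A Y = lambda *: Y.

Definition jacobi_dual {R : realFieldType} {n : nat} (G : 'M[R]_n)
  (Rt : 'rV[R]_n -> 'rV[R]_n -> 'rV[R]_n -> 'rV[R]_n -> R) : Prop :=
  forall X Y : 'rV[R]_n, sp G X X != 0 ->
    eigenvector (jacobi G Rt X) Y -> eigenvector (jacobi G Rt Y) X.

From mathcomp Require Import all_boot all_order all_algebra.
From mathcomp Require Import ring lra.
Import Order.TTheory GRing.Theory Num.Theory.
Set Implicit Arguments. Unset Strict Implicit.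
Local Open Scope ring_scope.

(* Write J_X Y = mu0 (g(X,X) Y - g(X,Y) X) + T X with T = sum_i b_i J_i and
   b_i = 3 mu_i g(J_i Y, X); skew-adjointness turns J_Y X into
   mu0 (g(Y,Y) X - g(X,Y) Y) - T Y.  If J_X Y = lambda Y then
   k Y = a X + T X with a = -mu0 g(X,Y) and k = lambda - mu0 g(X,X).  The
   Clifford relations give T^2 = C id, so applying T yields
   k (a Y - T Y) = (a^2 - C) X, which settles k != 0.  If k = 0, then T X is
   a multiple of X, hence 0 since T is skew-adjoint; pairing T X = 0 with each
   J_j X forces b_j c_j = 0, and since at most one c_j vanishes every b_j is
   0, so T = 0 and J_Y X is a multiple of X. *)

Section ScalarProduct.

Variables (R : realFieldType) (n : nat).

Lemma appD (A : 'M[R]_n) x y : app A (x + y) = app A x + app A y.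
Proof. exact: mulmxDl. Qed.

Lemma appZ (A : 'M[R]_n) a x : app A (a *: x) = a *: app A x.
Proof. by rewrite /app scalemxAl. Qed.

Lemma app_sum (I : finType) (A : 'M[R]_n) (F : I -> 'rV[R]_n) :
  app A (\sum_i F i) = \sum_i app A (F i).
Proof. exact: mulmx_suml. Qed.

Lemma app_lincomb (I : finType) (b : I -> R) (J : I -> 'M[R]_n) x :
  app (\sum_i b i *: J i) x = \sum_i b i *: app (J i) x.
Proof. by rewrite /app mulmx_sumr; apply: eq_bigr => i _; rewrite scalemxAr. Qed.

Variable G : 'M[R]_n.

Lemma spDl x y z : sp G (x + y) z = sp G x z + sp G y z.
Proof. by rewrite /sp !mulmxDl mxE. Qed.

Lemma spZl a x z : sp G (a *: x) z = a * sp G x z.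
Proof. by rewrite /sp -!scalemxAl mxE. Qed.

Lemma sp0l z : sp G 0 z = 0.
Proof. by rewrite /sp !mul0mx mxE. Qed.

Lemma spBl x y z : sp G (x - y) z = sp G x z - sp G y z.
Proof. by rewrite spDl -scaleN1r spZl mulN1r. Qed.

Lemma sp_suml (I : finType) (F : I -> 'rV[R]_n) z :
  sp G (\sum_i F i) z = \sum_i sp G (F i) z.
Proof. by rewrite /sp !mulmx_suml summxE. Qed.

Lemma jacobi_eq (Rt : 'rV[R]_n -> 'rV[R]_n -> 'rV[R]_n -> 'rV[R]_n -> R) X Y v :
  G \in unitmx -> (forall W, Rt Y X X W = sp G v W) -> jacobi G Rt X Y = v.
Proof.
move=> G_unit RtE; rewrite /jacobi.
suff -> : \row_k Rt Y X X (delta_mx 0 k) = v *m G by rewrite mulmxK.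
by apply/rowP => k; rewrite mxE RtE /sp trmx_delta -colE [LHS]mxE.
Qed.

Hypothesis G_sym : G^T = G.

Lemma sp_sym x y : sp G x y = sp G y x.
Proof.
rewrite /sp; have <- : (x *m G *m y^T)^T = y *m G *m x^T.
  by rewrite !trmx_mul trmxK G_sym mulmxA.
by rewrite [RHS]mxE.
Qed.

Lemma spDr x y z : sp G z (x + y) = sp G z x + sp G z y.
Proof. by rewrite !(sp_sym z) spDl. Qed.

Lemma spZr a x z : sp G x (a *: z) = a * sp G x z.
Proof. by rewrite sp_sym spZl sp_sym. Qed.

Lemma skew_sp_swap T x y :
  skew_adjoint G T -> sp G (app T x) y = - sp G (app T y) x.
Proof. by move=> T_skew; rewrite T_skew sp_sym. Qed.

Lemma skew_sp_self T x : skew_adjoint G T -> sp G (app T x) x = 0.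
Proof. by move=> T_skew; have := skew_sp_swap x x T_skew; lra. Qed.

Lemma skew_adjoint_lincomb (I : finType) (b : I -> R) (J : I -> 'M[R]_n) :
  (forall i, skew_adjoint G (J i)) -> skew_adjoint G (\sum_i b i *: J i).
Proof.
move=> J_skew; apply: big_ind => [x y|A B A_skew B_skew x y|i _ x y].
- by rewrite /app !mulmx0 sp0l sp_sym sp0l oppr0.
- by rewrite /app !mulmxDr spDl spDr A_skew B_skew opprD.
- by rewrite /app -!scalemxAr spZl spZr J_skew mulrN.
Qed.

Lemma skew_eigenvalue_eq0 T a x :
  skew_adjoint G T -> sp G x x != 0 -> app T x = a *: x -> a = 0.
Proof.
move=> T_skew nx Tx; have := skew_sp_self x T_skew.
by rewrite Tx spZl => /eqP; rewrite mulf_eq0 (negPf nx) orbF => /eqP.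
Qed.

End ScalarProduct.

Lemma double_sum_diag (R : numFieldType) (V : lmodType R) m
    (F : 'I_m -> 'I_m -> V) (D : 'I_m -> V) :
  (forall i k, F i k + F k i = if i == k then D i *+ 2 else 0) ->
  \sum_i \sum_k F i k = \sum_i D i.
Proof.
move=> FD; apply: (@scalerI _ _ 2); first by rewrite pnatr_eq0.
rewrite !scaler_nat !mulr2n [X in _ + X]exchange_big -!big_split /=.
apply: eq_bigr => i _; rewrite -big_split /= (bigD1 i) //= big1.
  by rewrite FD eqxx addr0 mulr2n.
by move=> k /negPf ki; rewrite FD eq_sym ki.
Qed.

Lemma scalar_square_dual (R : realFieldType) n (T : 'M[R]_n) (C k a : R) X Y :
  (forall x, app T (app T x) = C *: x) ->
  k *: Y = a *: X + app T X -> k *: (a *: Y - app T Y) = (a ^+ 2 - C) *: X.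
Proof.
move=> T2 kY.
have kTY : k *: app T Y = a *: app T X + C *: X.
  by rewrite -appZ kY appD appZ T2.
rewrite scalerBr kTY scalerA mulrC -scalerA kY scalerDr scalerA -expr2.
by rewrite scalerBl opprD addrA addrK.
Qed.

Section Clifford.

Variables (R : realFieldType) (n m : nat) (G : 'M[R]_n).
Hypothesis G_sym : G^T = G.
Variables (J : 'I_m -> 'M[R]_n) (c : 'I_m -> R).
Hypothesis J_skew : forall i, skew_adjoint G (J i).
Hypothesis J_cliff : forall (i j : 'I_m) (x : 'rV[R]_n),
  app (J i) (app (J j) x) + app (J j) (app (J i) x)
  = (if i == j then 2 * c i else 0) *: x.

Lemma sp_clifford i j x :
  sp G (app (J i) x) (app (J j) x) = - ((if i == j then c i else 0) * sp G x x).
Proof.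
have Ji := J_skew i x (app (J j) x).
have Jj := J_skew j x (app (J i) x).
rewrite [sp G (app (J j) x) _]sp_sym // in Jj.
have := congr1 (sp G x) (J_cliff i j x).
by rewrite spDr // spZr //; case: eqP => _; lra.
Qed.

Lemma clifford_lincomb_sqr (b : 'I_m -> R) x :
  app (\sum_i b i *: J i) (app (\sum_i b i *: J i) x)
  = (\sum_i b i ^+ 2 * c i) *: x.
Proof.
rewrite !app_lincomb scaler_suml.
under eq_bigr => i _ do rewrite app_sum scaler_sumr.
apply: double_sum_diag => i k.
rewrite !appZ !scalerA [b k * b i]mulrC -scalerDr J_cliff scalerA.
case: eqP => [->|_]; rewrite ?mulr0 ?scale0r //.
by rewrite scalerMnl; congr (_ *: _); ring.
Qed.

Hypothesis c_atmost1 : forall i j : 'I_m, c i = 0 -> c j = 0 -> i = j.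

Lemma clifford_lincomb_kernel (b : 'I_m -> R) x :
  sp G x x != 0 -> app (\sum_i b i *: J i) x = 0 ->
  forall j, b j = 0 \/ app (J j) x = 0.
Proof.
move=> nx Tx0.
have bc0 j : b j * c j = 0.
  have := congr1 (sp G ^~ (app (J j) x)) Tx0.
  rewrite /= sp0l app_lincomb sp_suml (bigD1 j) //= big1 => [|i /negPf ij].
    rewrite spZl sp_clifford eqxx addr0 => /esym/eqP.
    by rewrite eq_sym mulrN oppr_eq0 mulrA mulf_eq0 (negPf nx) orbF => /eqP.
  by rewrite spZl sp_clifford ij mul0r oppr0 mulr0.
have bc_eq0 j : c j != 0 -> b j = 0.
  by move=> cj; have /eqP := bc0 j; rewrite mulf_eq0 (negPf cj) orbF => /eqP.
move=> j; have [cj0|/bc_eq0] := eqVneq (c j) 0; last by left.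
have b_other i : i != j -> b i = 0.
  by move=> ij; apply: bc_eq0; apply: contra ij => /eqP ci0; rewrite (c_atmost1 ci0 cj0).
move: Tx0; rewrite app_lincomb (bigD1 j) //= big1 => [|i /b_other ->]; last first.
  by rewrite scale0r.
by rewrite addr0 => /eqP; rewrite scaler_eq0 => /orP[] /eqP; [left|right].
Qed.

Lemma clifford_collinear_eq0 (beta : 'I_m -> R) a X Y :
  let T := \sum_i (beta i * sp G (app (J i) Y) X) *: J i in
  sp G X X != 0 -> a *: X + app T X = 0 -> a = 0 /\ T = 0.
Proof.
move=> T nX aXTX.
have TX : app T X = - a *: X.
  by apply/eqP; rewrite scaleNr -subr_eq0 opprK addrC aXTX.
have a0 : a = 0.
  apply: oppr_inj; rewrite oppr0.
  exact (skew_eigenvalue_eq0 G_sym (skew_adjoint_lincomb G_sym _ J_skew) nX TX).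
split=> //; rewrite a0 oppr0 scale0r in TX; apply: big1 => i _.
have [->|JiX0] := clifford_lincomb_kernel nX TX i; first by rewrite scale0r.
by rewrite skew_sp_swap // JiX0 sp0l oppr0 mulr0 scale0r.
Qed.

End Clifford.

Lemma jacobi_clifford_curvature (R : realFieldType) (n m : nat) (G : 'M[R]_n)
    (G_sym : G^T = G) (G_unit : G \in unitmx)
    (J : 'I_m -> 'M[R]_n) (J_skew : forall i, skew_adjoint G (J i))
    (mu0 : R) (mu : 'I_m -> R) X Y :
  jacobi G (fun X Y Z W =>
    mu0 * R0 G X Y Z W + \sum_(i < m) mu i * RJ G (J i) X Y Z W) X Y =
  (mu0 * sp G X X) *: Y - (mu0 * sp G X Y) *: X
  + app (\sum_i (3 * mu i * sp G (app (J i) Y) X) *: J i) X.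
Proof.
apply: jacobi_eq => // W.
rewrite spDl spBl !spZl app_lincomb sp_suml /R0 [sp G Y X]sp_sym //.
congr (_ + _); first by ring.
by apply: eq_bigr => i _; rewrite spZl /RJ skew_sp_self //; ring.
Qed.

Unset Implicit Arguments.

Theorem mainTheorem2 (R : realFieldType) (n m : nat) (G : 'M[R]_n)
  (G_sym : G^T = G) (G_nondeg : G \in unitmx)
  (J : 'I_m -> 'M[R]_n) (c : 'I_m -> R)
  (J_skew : forall i, skew_adjoint G (J i))
  (J_cliff : forall (i j : 'I_m) (x : 'rV[R]_n),
      app (J i) (app (J j) x) + app (J j) (app (J i) x)
      = (if i == j then 2 * c i else 0) *: x)
  (c_atmost1 : forall i j : 'I_m, c i = 0 -> c j = 0 -> i = j)
  (mu0 : R) (mu : 'I_m -> R) :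
  jacobi_dual G (fun X Y Z W =>
    mu0 * R0 G X Y Z W + \sum_(i < m) mu i * RJ G (J i) X Y Z W).
Proof.
move=> X Y nX [_ [lam JXY]]; split.
  by apply: contra nX => /eqP ->; rewrite sp0l.
set b := fun i => 3 * mu i * sp G (app (J i) Y) X.
set T := \sum_i b i *: J i.
set a := - (mu0 * sp G X Y).
set k := lam - mu0 * sp G X X.
have kY : k *: Y = a *: X + app T X.
  move: JXY; rewrite jacobi_clifford_curvature // -/T /k scalerBl => <-.
  by rewrite addrC !addrA addNr add0r scaleNr.
have TXY : \sum_i (3 * mu i * sp G (app (J i) X) Y) *: J i = - T.
  rewrite -sumrN; apply: eq_bigr => i _.
  by rewrite skew_sp_swap // -scaleNr mulrN.
suff [nu nuX] : exists nu, a *: Y - app T Y = nu *: X.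
  exists (mu0 * sp G Y Y + nu); rewrite jacobi_clifford_curvature // TXY.
  by rewrite scalerDl -nuX [sp G Y X]sp_sym // /app mulmxN -/(app T Y) scaleNr addrA.
have [k0|nz_k] := eqVneq k 0.
  have [|a0 T0] := clifford_collinear_eq0 G_sym J_skew J_cliff c_atmost1
                     (beta := fun i => 3 * mu i) (a := a) (Y := Y) nX.
    by rewrite -[LHS]/(a *: X + app T X) -kY k0 scale0r.
  by exists 0; rewrite a0 (T0 : T = 0) /app mulmx0 !scale0r subr0.
exists ((a ^+ 2 - \sum_i b i ^+ 2 * c i) / k); apply: (scalerI nz_k).
by rewrite scalerA mulrC divfK // (scalar_square_dual (clifford_lincomb_sqr J_cliff b) kY).
Qed.
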